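(* Let $w\in\widehat W_{\mathrm{reg}}$ and $i\in\{0,\dots,l\}$, and put $\sigma=ws_i$. Then $\ker(\mathrm{id}-\tilde\sigma)$ is one-dimensional, the range $\mathrm{ran}(\mathrm{id}-\sigma)=\{x-\sigma(x)\mid x\in V\}$ is an affine hyperplane, and \[V_{w,i}=V_{\sigma,i}\subset\mathrm{ran}(\mathrm{id}-\sigma).\] Moreover $n_{w,i}$ is a normal vector to the affine hyperplane $\mathrm{ran}(\mathrm{id}-\sigma)$, and $\langle n_{w,i},\alpha_i^\vee\rangle=1$.
   Context: $V$ is a finite-dimensional real Euclidean space, $W$ an irreducible Weyl group acting on $V$ with simple roots $\alpha_1,\dots,\alpha_l$, highest root $\alpha_{\max}$, $\alpha_0:=-\alpha_{\max}$, $\alpha^\vee=2\alpha/\langle\alpha,\alpha\rangle$. Alcove $A=\{x\mid\langle\alpha_i,x\rangle+\delta_{i,0}>0,\ i=0,\dots,l\}$; $A_i$ is its face where $\langle\alpha_i,x\rangle+\delta_{i,0}=0$ and the other inequalities are strict. $\widehat W$ is generated by $s_i(x)=x-(\langle\alpha_i,x\rangle+\delta_{i,0})\alpha_i^\vee$. For $w\in\widehat W$, $\tilde w(x)=w(x)-w(0)$ is its linear part. $V_{w,i}=(\mathrm{id}-w)(A_i)$. $\widehat W_{\mathrm{reg}}=\{w\mid \mathrm{id}-\tilde w\text{ invertible}\}$, and for $w\in\widehat W_{\mathrm{reg}}$, $n_{w,i}:=(\mathrm{id}-\tilde w^{-1})^{-1}(\alpha_i)$. *)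

(* V = 'rV[R]_n with the standard inner product,
   R an arbitrary real (ordered) field. *)
From HB Require Import structures.
From mathcomp Require Import all_boot all_order all_algebra.
Set Implicit Arguments. Unset Strict Implicit. Unset Printing Implicit Defensive.
Import Order.TTheory GRing.Theory Num.Theory.
Local Open Scope ring_scope.

Definition dotv {R : pzRingType} {n : nat} (u v : 'rV[R]_n) : R := (u *m v^T) 0 0.

Definition coroot {R : fieldType} {n : nat} (a : 'rV[R]_n) : 'rV[R]_n :=
  (2 / dotv a a) *: a.

Definition refl {R : fieldType} {n : nat} (a x : 'rV[R]_n) : 'rV[R]_n :=
  x - dotv a x *: coroot a.

Definition root_system {R : fieldType} {n : nat} (Phi : seq 'rV[R]_n) : Prop :=
  [/\ 0 \notin Phi,
      (forall v : 'rV[R]_n, exists c : nat -> R,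
          v = \sum_(k < size Phi) c k *: Phi`_k),
      (forall a b, a \in Phi -> b \in Phi -> refl a b \in Phi),
      (forall a b, a \in Phi -> b \in Phi -> exists z : int, dotv b (coroot a) = z%:~R)
    & (forall a (c : R), a \in Phi -> c *: a \in Phi -> c = 1 \/ c = -1)].

(* The Weyl group W = <s_a | a in Phi> acts irreducibly on V: every subspace
   (row space of U) stable under all generators s_a of W is 0 or V. *)
Definition weyl_irreducible {R : fieldType} {n : nat} (Phi : seq 'rV[R]_n) : Prop :=
  forall U : 'M[R]_n,
    (forall a u, a \in Phi -> (u <= U)%MS -> (refl a u <= U)%MS) ->
    U = 0 \/ row_full U.

(* alpha_1, ..., alpha_l (l = n = dim V, indexed by 'I_n) are simple roots *)
Definition simple_roots {R : fieldType} {n : nat} (Phi : seq 'rV[R]_n)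
  (alpha : 'I_n -> 'rV[R]_n) : Prop :=
  (forall j, alpha j \in Phi) /\
  (forall b, b \in Phi -> exists c : 'I_n -> nat,
      b = \sum_j (c j)%:R *: alpha j \/ b = - \sum_j (c j)%:R *: alpha j).

Definition highest_root {R : fieldType} {n : nat} (Phi : seq 'rV[R]_n)
  (alpha : 'I_n -> 'rV[R]_n) (amax : 'rV[R]_n) : Prop :=
  amax \in Phi /\
  (forall b, b \in Phi -> exists c : 'I_n -> nat, amax - b = \sum_j (c j)%:R *: alpha j).

(* alpha_i for i in {0,...,l}, with alpha_0 = - alpha_max; index 0 is ord0,
   index j+1 is lift ord0 j *)
Definition ahat {R : fieldType} {n : nat} (alpha : 'I_n -> 'rV[R]_n) (amax : 'rV[R]_n)
  (i : 'I_n.+1) : 'rV[R]_n :=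
  match unlift ord0 i with None => - amax | Some j => alpha j end.

Definition delta0 {R : pzRingType} {n : nat} (i : 'I_n.+1) : R := (i == ord0)%:R.

Definition s_aff {R : fieldType} {n : nat} (alpha : 'I_n -> 'rV[R]_n) (amax : 'rV[R]_n)
  (i : 'I_n.+1) (x : 'rV[R]_n) : 'rV[R]_n :=
  x - (dotv (ahat alpha amax i) x + delta0 i) *: coroot (ahat alpha amax i).

(* the element s_{i_1} o ... o s_{i_k} of the affine Weyl group;
   every element of \hat W is of this form *)
Definition affW {R : fieldType} {n : nat} (alpha : 'I_n -> 'rV[R]_n) (amax : 'rV[R]_n)
  (word : seq 'I_n.+1) : 'rV[R]_n -> 'rV[R]_n :=
  foldr (fun i f => s_aff alpha amax i \o f) id word.

Definition linp {R : pzRingType} {n : nat} (w : 'rV[R]_n -> 'rV[R]_n) (x : 'rV[R]_n) :=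
  w x - w 0.

Definition regular {R : pzRingType} {n : nat} (w : 'rV[R]_n -> 'rV[R]_n) : Prop :=
  bijective (fun x => x - linp w x).

Definition face {R : realFieldType} {n : nat} (alpha : 'I_n -> 'rV[R]_n) (amax : 'rV[R]_n)
  (i : 'I_n.+1) (x : 'rV[R]_n) : Prop :=
  dotv (ahat alpha amax i) x + delta0 i = 0 /\
  (forall j : 'I_n.+1, j != i -> 0 < dotv (ahat alpha amax j) x + delta0 j).

Definition Vwi {R : realFieldType} {n : nat} (alpha : 'I_n -> 'rV[R]_n) (amax : 'rV[R]_n)
  (w : 'rV[R]_n -> 'rV[R]_n) (i : 'I_n.+1) (y : 'rV[R]_n) : Prop :=
  exists2 x, face alpha amax i x & y = x - w x.

Definition ran_id_sub {R : pzRingType} {n : nat} (f : 'rV[R]_n -> 'rV[R]_n) (y : 'rV[R]_n) : Prop :=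
  exists x, y = x - f x.

(* v = n_{w,i}, i.e. (id - ~w^{-1}) v = alpha_i, i.e. v - m = alpha_i where ~w m = v *)
Definition is_nwi {R : fieldType} {n : nat} (alpha : 'I_n -> 'rV[R]_n) (amax : 'rV[R]_n)
  (w : 'rV[R]_n -> 'rV[R]_n) (i : 'I_n.+1) (v : 'rV[R]_n) : Prop :=
  exists m, linp w m = v /\ v - m = ahat alpha amax i.

(* Every w in \hat W is x |-> x M + w(0) with M orthogonal, and
   regularity of w means that N = id - M is invertible.  With a = alpha_i,
   x - ~sigma(x) = x - (s_a x) M = (x + <a, x> u) N, where u = (a^vee M) N^-1.
   Orthogonality of M gives <n_{w,i}, a^vee> = 1 for n_{w,i} = a (N^T)^-1, and
   from it <a, u> = -1; so x |-> x - ~sigma(x) has kernel R u and range the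
   hyperplane orthogonal to n_{w,i}.  Finally s_i fixes the face A_i pointwise. *)
From HB Require Import structures.
From mathcomp Require Import all_boot all_order all_algebra.
Import Order.TTheory GRing.Theory Num.Theory.
Local Open Scope ring_scope.

Section InnerProduct.
Context {R : comPzRingType} {n : nat}.
Implicit Types (a b x y : 'rV[R]_n).

Lemma dotvC a b : dotv a b = dotv b a.
Proof. by rewrite /dotv -[b *m a^T]trmxK trmx_mul trmxK [RHS]mxE. Qed.

Lemma dotvDr a x y : dotv a (x + y) = dotv a x + dotv a y.
Proof. by rewrite /dotv linearD /= mulmxDr mxE. Qed.

Lemma dotvZr a (k : R) x : dotv a (k *: x) = k * dotv a x.
Proof. by rewrite /dotv linearZ /= -scalemxAr mxE. Qed.

Lemma dotvNr a x : dotv a (- x) = - dotv a x.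
Proof. by rewrite -scaleN1r dotvZr mulN1r. Qed.

Lemma dotvBr a x y : dotv a (x - y) = dotv a x - dotv a y.
Proof. by rewrite dotvDr dotvNr. Qed.

Lemma dotvBl a b x : dotv (a - b) x = dotv a x - dotv b x.
Proof. by rewrite dotvC dotvBr !(dotvC x). Qed.

Lemma dotv0r a : dotv a 0 = 0.
Proof. by rewrite -(scale0r 0) dotvZr mul0r. Qed.

Lemma dotv_mulmx a x (A : 'M[R]_n) : dotv a (x *m A) = dotv (a *m A^T) x.
Proof. by rewrite /dotv trmx_mul mulmxA. Qed.

Lemma mulmx_rank1 x a (c : 'rV[R]_n) : x *m (a^T *m c) = dotv a x *: c.
Proof. by rewrite mulmxA [x *m a^T]mx11_scalar mul_scalar_mx dotvC. Qed.

Lemma dotv_orthogonal (M : 'M[R]_n) x y :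
  M^T *m M = 1%:M -> dotv (x *m M^T) (y *m M^T) = dotv x y.
Proof. by move=> hM; rewrite dotv_mulmx trmxK -mulmxA hM mulmx1. Qed.

End InnerProduct.

(* The inner product is definite: this is where the order on R is used. *)
Lemma dotv_eq0 {R : realDomainType} {n : nat} (a : 'rV[R]_n) :
  dotv a a = 0 -> a = 0.
Proof.
move=> h; apply/rowP => j; rewrite mxE.
have hs : dotv a a = \sum_k a 0 k * a 0 k.
  by rewrite /dotv mxE; apply: eq_bigr => k _; rewrite mxE.
have sq_ge0 k : 0 <= a 0 k * a 0 k by rewrite -expr2 sqr_ge0.
move: h; rewrite hs => /eqP; rewrite psumr_eq0 => [|k _]; last exact: sq_ge0.
move/allP/(_ j (mem_index_enum j))/implyP/(_ isT).
by rewrite mulf_eq0 orbb => /eqP.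
Qed.

Section AffineWeylGroup.
Context {R : fieldType} {n : nat}.
Variables (alpha : 'I_n -> 'rV[R]_n) (amax : 'rV[R]_n).

Definition refl_mx (a : 'rV[R]_n) : 'M[R]_n := 1%:M - a^T *m coroot a.

Lemma refl_mxE a x : x *m refl_mx a = refl a x.
Proof. by rewrite /refl_mx mulmxBr mulmx1 mulmx_rank1. Qed.

Lemma refl_mx_sym a : (refl_mx a)^T = refl_mx a.
Proof.
rewrite /refl_mx /coroot linearB /= trmx1 trmx_mul trmxK -scalemxAr.
by rewrite linearZ /= -scalemxAl.
Qed.

(* s_a is an involution (trivially so in the degenerate case <a, a> = 0). *)
Lemma refl_mx_invol a : refl_mx a *m refl_mx a = 1%:M.
Proof.
have [h|h] := eqVneq (dotv a a) 0.
  by rewrite /refl_mx /coroot h invr0 mulr0 scale0r mulmx0 subr0 mulmx1.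
set Q := a^T *m coroot a.
have QQ : Q *m Q = Q *+ 2.
  rewrite /Q -mulmxA mulmx_rank1 -scalemxAr -scaler_nat; congr (_ *: _).
  by rewrite /coroot dotvZr mulfVK.
rewrite /refl_mx mulmxBl mul1mx mulmxBr mulmx1 QQ mulr2n.
by rewrite opprB addrA -/Q addrA subrK addrK.
Qed.

Lemma s_affE i x :
  s_aff alpha amax i x =
  refl (ahat alpha amax i) x - delta0 i *: coroot (ahat alpha amax i).
Proof. by rewrite /s_aff /refl scalerDl opprD addrA. Qed.

Lemma affW_affine (word : seq 'I_n.+1) : exists M : 'M[R]_n,
  M *m M^T = 1%:M /\
  forall x, affW alpha amax word x = x *m M + affW alpha amax word 0.
Proof.
elim: word => [|j word [M [hM hw]]].
  by exists 1%:M; rewrite trmx1 mulmx1; split=> // x; rewrite mulmx1 addr0.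
set P := refl_mx (ahat alpha amax j).
exists (M *m P); split.
  by rewrite trmx_mul refl_mx_sym mulmxA -(mulmxA M) refl_mx_invol mulmx1.
move=> x /=; rewrite !s_affE -!refl_mxE hw [affW _ _ _ 0]hw mul0mx add0r.
by rewrite mulmxDl mulmxA addrA.
Qed.

Section AffineMap.
Context {w : 'rV[R]_n -> 'rV[R]_n} {M : 'M[R]_n}.
Hypothesis w_affine : forall x, w x = x *m M + w 0.

Lemma linp_affine x : linp w x = x *m M.
Proof. by rewrite /linp w_affine addrK. Qed.

Lemma linp_affine_s_aff i x :
  linp (w \o s_aff alpha amax i) x = refl (ahat alpha amax i) x *m M.
Proof.
rewrite /linp /= !s_affE w_affine [w (refl _ 0 - _)]w_affine -!refl_mxE mul0mx sub0r.
by rewrite mulmxBl mulNmx opprD opprK addrACA subrr addr0 subrK.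
Qed.

Lemma regular_unitmx : regular w -> 1%:M - M \in unitmx.
Proof.
move=> /bij_inj w_inj; rewrite -row_free_unit; apply: inj_row_free => v hv.
apply: w_inj; rewrite /= !linp_affine mul0mx subr0.
by rewrite -hv mulmxBr mulmx1.
Qed.

Lemma is_nwiE i v : M *m M^T = 1%:M ->
  is_nwi alpha amax w i v -> v - v *m M^T = ahat alpha amax i.
Proof.
move=> orthoM [m [<- hm]]; rewrite linp_affine in hm *.
by rewrite -mulmxA orthoM mulmx1.
Qed.

End AffineMap.

Lemma ahat_neq0 {Phi : seq 'rV[R]_n} :
  root_system Phi -> simple_roots Phi alpha -> highest_root Phi alpha amax ->
  forall i, ahat alpha amax i != 0.
Proof.
case=> Phi0 _ _ _ _ [alphaPhi _] [amaxPhi _] i.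
rewrite /ahat; case: unliftP => [j _|_].
  by apply: contraNneq Phi0 => <-.
by rewrite oppr_eq0; apply: contraNneq Phi0 => <-.
Qed.

End AffineWeylGroup.

Lemma s_aff_face {R : realFieldType} {n : nat} (alpha : 'I_n -> 'rV[R]_n)
  (amax : 'rV[R]_n) i x : face alpha amax i x -> s_aff alpha amax i x = x.
Proof. by case=> hx _; rewrite /s_aff hx scale0r subr0. Qed.

(* Given a matrix M and a vector a, the linear map x |-> x - (s_a x) M; for
   ~w = M and a = alpha_i this is id - ~sigma with sigma = w o s_i. *)
Definition dsig {R : fieldType} {n : nat} (M : 'M[R]_n) (a x : 'rV[R]_n) :
  'rV[R]_n := x - refl a x *m M.

(* The vector (a^vee M)(id - M)^-1, which spans the kernel of dsig M a. *)
Definition kerv {R : fieldType} {n : nat} (M : 'M[R]_n) (a : 'rV[R]_n) :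
  'rV[R]_n := coroot a *m M *m invmx (1%:M - M).

(* The solution v of v - v M^T = a; for orthogonal M = ~w this is n_{w,i}. *)
Definition normalv {R : fieldType} {n : nat} (M : 'M[R]_n) (a : 'rV[R]_n) :
  'rV[R]_n := a *m invmx (1%:M - M)^T.

Section RegularOrthogonal.
Context {R : fieldType} {n : nat}.
Context {M : 'M[R]_n} {a : 'rV[R]_n}.
Hypotheses (orthoM : M *m M^T = 1%:M) (unitN : 1%:M - M \in unitmx).
Hypothesis a_aniso : dotv a a != 0.

Local Notation N := (1%:M - M).
Local Notation c := (coroot a).

Let orthoMT : M^T *m M = 1%:M. Proof. exact: mulmx1C. Qed.
Let unitNT : N^T \in unitmx. Proof. by rewrite unitmx_tr. Qed.
Let mulmxNT (v : 'rV[R]_n) : v *m N^T = v - v *m M^T.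
Proof. by rewrite linearB /= trmx1 mulmxBr mulmx1. Qed.
Let a_neq0 : a != 0.
Proof. by apply: contraNneq a_aniso => ->; rewrite /dotv mul0mx mxE. Qed.
Let dota_coroot : dotv a c = 2.
Proof. by rewrite /coroot dotvZr mulfVK. Qed.

Lemma dsigE x : dsig M a x = (x + dotv a x *: kerv M a) *m N.
Proof.
rewrite mulmxDl -scalemxAl /kerv mulmxKV // /dsig /refl mulmxBl -scalemxAl.
by rewrite mulmxBr mulmx1 opprB addrA addrAC.
Qed.

Lemma normalv_unique v : v - v *m M^T = a -> v = normalv M a.
Proof. by move=> hv; rewrite /normalv -hv -mulmxNT mulmxK. Qed.

Lemma normalvE : normalv M a - normalv M a *m M^T = a.
Proof. by rewrite -mulmxNT /normalv mulmxKV. Qed.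

Lemma normalv_dot y : dotv (normalv M a) y = dotv a (y *m invmx N).
Proof. by rewrite dotv_mulmx trmx_inv. Qed.

(* For v = normalv M a we have a = v - v M^T with |v M^T| = |v| since M is
   orthogonal, hence <a, a> = 2 <v, a>, i.e. <v, a^vee> = 1.  (In particular
   2 != 0 in R, as <a, a> != 0.) *)
Lemma normalv_coroot : dotv (normalv M a) c = 1.
Proof.
set v := normalv M a.
have ha : a = v - v *m M^T by rewrite normalvE.
have e : dotv a a = dotv v a *+ 2.
  rewrite ha !dotvBl !dotvBr dotv_orthogonal // (dotvC (v *m M^T)).
  by rewrite mulr2n opprB.
rewrite -mulr_natl in e.
have h2 : (2 : R) != 0 by apply: contraNneq a_aniso => h; rewrite e h mul0r.
have hd : dotv v a != 0 by apply: contraNneq a_aniso => h; rewrite e h mulr0.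
by rewrite /coroot dotvZr e invfM mulrA mulfV // mul1r mulVf.
Qed.

Lemma normalv_neq0 : normalv M a != 0.
Proof. by apply: contra_neq a_neq0 => h0; rewrite -normalvE h0 mul0mx subrr. Qed.

(* <a, kerv M a> = <normalv M a, a^vee M> = <normalv M a - a, a^vee> = 1 - 2. *)
Lemma dota_kerv : dotv a (kerv M a) = -1.
Proof.
rewrite /kerv -normalv_dot dotv_mulmx; set v := normalv M a.
have -> : v *m M^T = v - a by rewrite -normalvE subKr.
by rewrite dotvBl normalv_coroot dota_coroot -[2]/(1 + 1) opprD addNKr.
Qed.

Lemma kerv_neq0 : kerv M a != 0.
Proof.
apply/eqP => h0; move: dota_kerv; rewrite h0 dotv0r => /eqP.
by rewrite eq_sym oppr_eq0 oner_eq0.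
Qed.

Lemma dsig_kernel x : dsig M a x = 0 <-> exists k : R, x = k *: kerv M a.
Proof.
rewrite dsigE; split => [hx|[k ->]].
  exists (- dotv a x); apply/eqP; rewrite scaleNr -addr_eq0.
  by apply/eqP; rewrite -[LHS](mulmxK unitN) hx mul0mx.
by rewrite dotvZr dota_kerv mulrN1 scaleNr subrr mul0mx.
Qed.

Lemma dsig_image y : (exists x, y = dsig M a x) <-> dotv (normalv M a) y = 0.
Proof.
split => [[x ->]|hy].
  by rewrite dsigE normalv_dot mulmxK // dotvDr dotvZr dota_kerv mulrN1 subrr.
by exists (y *m invmx N); rewrite dsigE -normalv_dot hy scale0r addr0 mulmxKV.
Qed.

Lemma ran_id_sub_affine (f : 'rV[R]_n -> 'rV[R]_n) y :
  (forall x, x - linp f x = dsig M a x) ->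
  ran_id_sub f y <-> dotv (normalv M a) (y + f 0) = 0.
Proof.
move=> linf; have id_sub_f x : x - f x = dsig M a x - f 0.
  by rewrite -linf /linp opprB addrA addrAC addrK.
apply: iff_trans (dsig_image _); split=> [[x ->]|[x hx]]; exists x.
  by rewrite id_sub_f subrK.
by rewrite id_sub_f -hx addrK.
Qed.

End RegularOrthogonal.

Theorem lemma3p2 (R : realFieldType) (n : nat) (Phi : seq 'rV[R]_n)
  (alpha : 'I_n -> 'rV[R]_n) (amax : 'rV[R]_n)
  (hPhi : root_system Phi) (hirr : weyl_irreducible Phi)
  (hsimple : simple_roots Phi alpha) (hmax : highest_root Phi alpha amax)
  (word : seq 'I_n.+1) (i : 'I_n.+1) :
  let w := affW alpha amax word in
  let sigma := w \o s_aff alpha amax i in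
  regular w ->
  [/\ (* ker(id - ~sigma) is one-dimensional *)
      (exists v : 'rV[R]_n, v != 0 /\
         forall x, (x - linp sigma x = 0 <-> exists c : R, x = c *: v)),
      (* ran(id - sigma) is an affine hyperplane *)
      (exists (a : 'rV[R]_n) (b : R), a != 0 /\
         forall y, (ran_id_sub sigma y <-> dotv a y = b)),
      (* V_{w,i} = V_{sigma,i} \subset ran(id - sigma) *)
      (forall y, Vwi alpha amax w i y <-> Vwi alpha amax sigma i y),
      (forall y, Vwi alpha amax sigma i y -> ran_id_sub sigma y)
    & (* n_{w,i} is a normal vector to ran(id - sigma), <n_{w,i}, alpha_i^vee> = 1 *)
      (forall v, is_nwi alpha amax w i v ->
         [/\ v != 0,
             (forall y z, ran_id_sub sigma y -> ran_id_sub sigma z -> dotv v (y - z) = 0)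
           & dotv v (coroot (ahat alpha amax i)) = 1])].
Proof.
move=> w sigma hreg.
have [M [orthoM w_affine]] := affW_affine alpha amax word.
have unitN := regular_unitmx w_affine hreg.
have a_aniso : dotv (ahat alpha amax i) (ahat alpha amax i) != 0.
  by apply: contra (ahat_neq0 alpha amax hPhi hsimple hmax i) => /eqP/dotv_eq0 ->.
set a := ahat alpha amax i in a_aniso *.
have linsig x : x - linp sigma x = dsig M a x.
  by rewrite (linp_affine_s_aff _ _ w_affine).
have ranE y : ran_id_sub sigma y <-> dotv (normalv M a) (y + sigma 0) = 0.
  exact: ran_id_sub_affine orthoM unitN a_aniso sigma y linsig.
have nwiE v : is_nwi alpha amax w i v -> v = normalv M a.
  by move=> hv; apply: (normalv_unique unitN); exact: is_nwiE _ _ w_affine _ _ orthoM hv.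
split.
- exists (kerv M a); split; first exact: kerv_neq0.
  by move=> x; rewrite linsig; exact: dsig_kernel.
- exists (normalv M a), (- dotv (normalv M a) (sigma 0)); split.
    exact: normalv_neq0.
  move=> y; apply: iff_trans (ranE y) _; rewrite dotvDr.
  by split=> [/eqP|->]; rewrite ?addNr // addr_eq0 => /eqP.
- by move=> y; split=> -[x hx ->]; exists x; rewrite // /sigma /= s_aff_face.
- by move=> y [x _ ->]; exists x.
- move=> v /nwiE ->; split; [exact: normalv_neq0 | | exact: normalv_coroot].
  move=> y z /ranE hy /ranE hz.
  by rewrite -(addrKA (sigma 0)) dotvBr hy [sigma 0 + z]addrC hz subrr.
Qed.
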